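(* Let $A$ be a $0$-$1$ matrix over a set $\mathcal G$ with no identically zero rows, and let $L_\alpha$, $\psi$ and $j$ be as in the context. If $f\in\bigoplus_{x\in\mathcal G}C(\Delta_x;\mathbb Z)$ satisfies $L_\alpha f\in\psi(\tilde{\mathfrak R}_A)$, then $f\in j\big(\bigoplus_{x\in\mathcal G}\mathbb Z\big)$.
   Context: $\mathbb F$ is the free group on $\mathcal G$, $\mathbb F^+$ the unital subsemigroup generated by $\mathcal G$. $\Omega_A^\tau$ is the set of $\xi\subset\mathbb F$ such that $e\in\xi$, $\xi$ is convex (contains the shortest path between any two of its elements), for each $\omega\in\xi$ there is at most one $y\in\mathcal G$ with $\omega y\in\xi$, and if $\omega,\omega y\in\xi$ ($y\in\mathcal G$) then for $x\in\mathcal G$: $\omega x^{-1}\in\xi\iff A(x,y)=1$. With the product topology on subsets of $\mathbb F$, $\widetilde\Omega_A$ is the closure in $\Omega_A^\tau$ of the elements with no upper bound for the order $s\le t\iff s^{-1}t\in\mathbb F^+$. $\Delta_t=\{\xi\in\widetilde\Omega_A:t\in\xi\}$ (clopen). $L_\alpha:\bigoplus_{x\in\mathcal G}C(\Delta_x,\mathbb Z)\to C(\widetilde\Omega_A,\mathbb Z)$ is $L_\alpha f=\sum_x\big(f_x-\alpha_x^{-1}(f_x)\big)$, where $f_x$ is extended by $0$ off $\Delta_x$ and $\alpha_x^{-1}(f_x)(\xi)=f_x(x\xi)$ for $\xi\in\Delta_{x^{-1}}$, $0$ otherwise. $j:\bigoplus_{x\in\mathcal G}\mathbb Z\to\bigoplus_{x\in\mathcal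 G}C(\Delta_x;\mathbb Z)$ sends the $x$-th basis element to the characteristic function $1_{\Delta_x}$ in the $x$-th summand. $\rho_i(j)=A(i,j)$, $\delta_i=$ indicator of $\{i\}$; $\tilde R_A\subset\ell^\infty(\mathcal G)$ is the $C^*$-algebra generated by $\mathbf 1$ and all $\rho_i,\delta_i$; $\tilde{\mathfrak R}_A\subset\mathbb Z^{\mathcal G}$ is the ring generated by $\mathbf 1$ and all $\delta_i,\rho_i$. $\tilde{\mathcal G}=\mathcal G\cup\{\star\}$; $c_j(i)=A(i,j)$; $\tilde\Gamma_A$ is the closure of $\{(j,c_j)\}$ in $\tilde{\mathcal G}\times\{0,1\}^{\mathcal G}$; each $f\in\tilde R_A$ has a unique continuous extension $\hat f$ to $\tilde\Gamma_A$ (identifying $j$ with $(j,c_j)$). For $\xi\in\widetilde\Omega_A$, $R_\xi(e)=\{x\in\mathcal G:x^{-1}\in\xi\}$ and $\sigma(\xi)_1$ is the unique element of $\xi\cap\mathcal G$, or $\star$ if empty. $\psi:\tilde R_A\to C(\widetilde\Omega_A)$ is $\psi(f)(\xi)=\hat f(\sigma(\xi)_1,R_\xi(e))$; it is an injective unital $*$-homomorphism with $\psi(\delta_i)=1_{\Delta_i}$ and $\psi(\rho_i)=1_{\Delta_{i^{-1}}}$. *)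

From mathcomp Require Import all_boot all_order all_algebra.
From mathcomp Require Import boolp.
Set Implicit Arguments. Unset Strict Implicit. Unset Printing Implicit Defensive.
Import GRing.Theory.
Local Open Scope ring_scope.

(* The free group F on a set (type) G, as reduced words.               *)
(* A letter (x, true) stands for the generator x, (x, false) for x^-1. *)
Section FreeGroup.
Variable G : eqType.

Definition letter := (G * bool)%type.
Definition word := seq letter.

Definition linv (a : letter) : letter := (a.1, ~~ a.2).

Fixpoint reduced (w : word) : bool :=
  match w with
  | a :: ((b :: _) as w') => (b != linv a) && reduced w'
  | _ => true
  end.

Definition push (a : letter) (w : word) : word :=
  match w with
  | b :: w' => if b == linv a then w' else a :: w
  | [::] => [:: a]
  end.

Definition fmul (w v : word) : word := foldr push v w.
Definition finv (w : word) : word := rev (map linv w).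
Definition gen (x : G) : word := [:: (x, true)].
Definition geninv (x : G) : word := [:: (x, false)].

(* F^+ : unital subsemigroup generated by G = positive words *)
Definition positive (w : word) : bool := all (fun a : letter => a.2) w.

Definition fle (s t : word) : Prop := positive (fmul (finv s) t).
End FreeGroup.

(* subsets of F are predicates on words (all of whose elements are reduced) *)
Section Omega.
Variable G : eqType.
Variable A : G -> G -> bool.

Local Notation word := (word G).

Definition OmegaTau (xi : (word -> Prop)) : Prop :=
  [/\ (forall w, xi w -> reduced w),
      xi [::],
      (* convexity: xi contains the geodesic s, s p_1, ..., t for s,t in xi *)
      (forall s t k, xi s -> xi t -> xi (fmul s (take k (fmul (finv s) t)))),
      (forall w y y', xi w -> xi (fmul w (gen y)) -> xi (fmul w (gen y')) -> y = y') &
      (forall w y x, xi w -> xi (fmul w (gen y)) ->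
          (xi (fmul w (geninv x)) <-> A x y))].

Definition unbounded (xi : (word -> Prop)) : Prop :=
  ~ exists t : word, reduced t /\ forall s, xi s -> fle s t.

(* the product topology on subsets of F: basic neighbourhoods of xi are
   determined by finite sets of group elements *)
Definition agree_on (l : seq word) (xi eta : (word -> Prop)) : Prop :=
  forall w, w \in l -> (xi w <-> eta w).

(* tilde Omega_A : closure in Omega_A^tau of the unbounded elements *)
Definition OmegaTilde (xi : (word -> Prop)) : Prop :=
  OmegaTau xi /\
  forall l : seq word, exists eta, [/\ OmegaTau eta, unbounded eta & agree_on l xi eta].

Definition Delta (t : word) (xi : (word -> Prop)) : Prop := OmegaTilde xi /\ xi t.

Definition translate (x : G) (xi : (word -> Prop)) : (word -> Prop) :=
  fun v => exists w, xi w /\ v = fmul (gen x) w.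

(* continuity of a Z-valued function on the subspace Delta_x
   (Z discrete, product topology on subsets of F) *)
Definition continuous_on_Delta (t : word) (g : (word -> Prop) -> int) : Prop :=
  forall xi, Delta t xi ->
    exists l : seq word, forall eta, Delta t eta -> agree_on l xi eta -> g eta = g xi.

(* An element f of  (+)_{x in G} C(Delta_x ; Z): a family of continuous
   functions f x on Delta_x (values off Delta_x are irrelevant), with finite
   support contained in the list s. *)
Definition in_dsum (s : seq G) (f : G -> (word -> Prop) -> int) : Prop :=
  (forall x, continuous_on_Delta (gen x) (f x)) /\
  (forall x, x \notin s -> forall xi, Delta (gen x) xi -> f x xi = 0).

(* L_alpha f = sum_x ( f_x - alpha_x^{-1}(f_x) ), f_x extended by 0 *)
Definition Lalpha (s : seq G) (f : G -> (word -> Prop) -> int) (xi : (word -> Prop)) : int :=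
  \sum_(x <- undup s)
     ((if `[< Delta (gen x) xi >] then f x xi else 0)
      - (if `[< Delta (geninv x) xi >] then f x (translate x xi) else 0)).

(* psi( tilde frak R_A ): image under the unital ring homomorphism psi of the
   ring generated by 1, delta_i, rho_i; i.e. the subring of Z-valued functions
   on tilde Omega_A generated by 1, psi(delta_i) = 1_{Delta_i} and
   psi(rho_i) = 1_{Delta_{i^-1}}. *)
Inductive psiR : ((word -> Prop) -> int) -> Prop :=
  | psiR_one : psiR (fun _ => 1)
  | psiR_delta i : psiR (fun xi => if `[< Delta (gen i) xi >] then 1 else 0)
  | psiR_rho i : psiR (fun xi => if `[< Delta (geninv i) xi >] then 1 else 0)
  | psiR_add g h : psiR g -> psiR h -> psiR (fun xi => g xi + h xi)
  | psiR_opp g : psiR g -> psiR (fun xi => - g xi)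
  | psiR_mul g h : psiR g -> psiR h -> psiR (fun xi => g xi * h xi).

End Omega.

(* Each f_x is continuous on the compact set Delta_x, a closed subset of the
   Cantor space of subsets of F, so it only depends on the words of length at
   most k of xi, for some k that can be taken uniform in x.  This bound is
   lowered one step at a time.  For xi in Delta_y,
     L_alpha f (xi) = f_y(xi) - sum_{x^-1 in xi} f_x(x xi),
   where x^-1 in xi iff A(x, y), and every function of psi(R_A) only depends
   on y as well.  Moreover the words of xi beginning with an inverse generator
   are forced by y (they form the backward path prescribed by A), so if xi and
   xi' in Delta_y agree up to length k, then x xi and x xi' agree up to length
   k + 1.  Hence f_y(xi) = f_y(xi'), and at k = 0 f_y is constant on Delta_y. *)

From mathcomp Require Import all_boot all_order all_algebra.
From mathcomp Require Import boolp classical_sets filter topology.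
Set Implicit Arguments. Unset Strict Implicit. Unset Printing Implicit Defensive.
Import GRing.Theory ArrowAsProduct.
Local Open Scope ring_scope.

Section FreeGroup.
Variable G : eqType.
Implicit Types (a b : letter G) (w v z : word G).

Lemma linvK : involutive (@linv G).
Proof. by case=> x []. Qed.

Lemma reduced_behead w : reduced w -> reduced (behead w).
Proof. by case: w => [|a [|b w]] //= /andP[]. Qed.

Lemma reduced_drop n w : reduced w -> reduced (drop n w).
Proof.
by elim: n w => [//|n IH] [|a w] // Hw; exact: IH (reduced_behead Hw).
Qed.

Lemma reduced_take n w : reduced w -> reduced (take n w).
Proof.
elim: w n => [|a [|b w] IH] [|n] //= /andP[ba Hbw].
by case: n => [|n] //=; move: (IH n.+1 Hbw) => /= ->; rewrite ba.
Qed.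

Lemma reduced_push a w : reduced w -> reduced (push a w).
Proof.
case: w => [|b w] // Hw /=; case: eqP => [_|/eqP ba]; first exact: reduced_behead Hw.
by rewrite [reduced _]/= ba.
Qed.

Lemma reduced_fmul w v : reduced v -> reduced (fmul w v).
Proof. by elim: w => [|a w IH] //= Hv; apply/reduced_push/IH. Qed.

Lemma push_linvK a z : reduced z -> push a (push (linv a) z) = z.
Proof.
case: z => [|b z] /=; first by rewrite eqxx.
rewrite linvK; case: eqP => [->|_] /=; last by rewrite eqxx.
by case: z => [|c z] //= /andP[/negbTE ->].
Qed.

Lemma push_fmul a w v : reduced v -> push a (fmul w v) = fmul (push a w) v.
Proof.
case: w => [|b w] //= Hv; case: eqP => [->|_] //=.
by rewrite push_linvK // reduced_fmul.
Qed.

Lemma fmulA u w v : reduced v -> fmul (fmul u w) v = fmul u (fmul w v).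
Proof.
by move=> Hv; elim: u => [|a u IH] //=; rewrite -IH (push_fmul a (fmul u w) Hv).
Qed.

Lemma fmul_cat w v : reduced (w ++ v) -> fmul w v = w ++ v.
Proof.
elim: w => [|a w IH] // Hawv /=; rewrite IH; last exact: reduced_behead Hawv.
by move: Hawv => /=; case: (w ++ v) => [|b wv] //= /andP[/negbTE ->].
Qed.

Lemma fmulw0 w : reduced w -> fmul w [::] = w.
Proof. by move=> Hw; rewrite fmul_cat cats0. Qed.

Lemma fmul_rcons w a v : fmul (rcons w a) v = fmul w (push a v).
Proof. exact: foldr_rcons. Qed.

Lemma finv_cons a w : finv (a :: w) = rcons (finv w) (linv a).
Proof. by rewrite /finv /= rev_cons. Qed.

Lemma fmulV w : fmul (finv w) w = [::].
Proof. by elim: w => [|a w IH] //; rewrite finv_cons fmul_rcons /= linvK eqxx. Qed.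

Lemma fmulKV w z : reduced z -> fmul w (fmul (finv w) z) = z.
Proof.
elim: w z => [|a w IH] z Hz //.
by rewrite finv_cons fmul_rcons /= IH ?reduced_push // push_linvK.
Qed.

Lemma fmulK w z : reduced z -> fmul (finv w) (fmul w z) = z.
Proof. by move=> Hz; rewrite -fmulA // fmulV. Qed.

Lemma finv_fmul w v z : reduced z ->
  fmul (finv (fmul w v)) z = fmul (finv v) (fmul (finv w) z).
Proof.
move=> Hz; have Hwz : reduced (fmul (finv w) z) by exact: reduced_fmul.
have E : fmul (fmul w v) (fmul (finv v) (fmul (finv w) z)) = z.
  by rewrite fmulA ?reduced_fmul // !fmulKV.
by rewrite -{1}E fmulK ?reduced_fmul.
Qed.

End FreeGroup.

Section FiniteDependence.
Local Open Scope classical_set_scope.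
Variable T : eqType.
Implicit Types (p q : T -> bool) (l : seq T).

Lemma nbhs_eq_on p l : nbhs p [set q : T -> bool | {in l, q =1 p}].
Proof.
elim: l => [|t l IH]; first by apply: filterS (@filterT _ (nbhs p) _) => q _ t.
have Ht : nbhs p [set q | q t = p t].
  by apply: (@proj_continuous _ (fun=> bool) t p [set p t]); exact/principal_filterP.
by apply: filterS (filterI Ht IH) => q [qt ql] t'; rewrite inE => /predU1P[->|/ql].
Qed.

Lemma compact_finite_dependence (R : Type) (K : set (T -> bool))
    (h : (T -> bool) -> R) :
  compact K ->
  (forall p, K p -> exists l : seq T, forall q, K q -> {in l, q =1 p} -> h q = h p) ->
  exists L : seq T, forall p q, K p -> K q -> {in L, p =1 q} -> h p = h q.
Proof.
move=> cK hloc; apply: contrapT => noL.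
pose bad (L : seq T) := [set p | K p /\ exists2 q, K q & {in L, p =1 q} /\ h p <> h q].
have bad_neq0 L : bad L !=set0.
  apply: contrapT => bad0; apply: noL; exists L => p q Kp Kq Epq.
  by apply: contrapT => hpq; apply: bad0; exists p; split=> //; exists q.
pose F := filter_from setT bad.
have F_filter : Filter F.
  apply: filter_from_filter => [|L L' _ _]; first by exists [::].
  exists (L ++ L') => // p [Kp [q Kq [Epq hpq]]].
  split; split=> //; exists q => //; split=> // t Lt; apply: Epq.
    by rewrite mem_cat Lt.
  by rewrite mem_cat Lt orbT.
have [|p [Kp p_cluster]] := cK F (filter_from_proper F_filter (fun L _ => bad_neq0 L)).
  by exists [::] => // p [].
have [l hl] := hloc p Kp.
have Fbad : F (bad l) by exists l.
have [q [[Kq [q' Kq' [Eqq' hqq']]] Eqp]] := p_cluster _ _ Fbad (nbhs_eq_on p l).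
by apply: hqq'; rewrite (hl q) // (hl q') // => t lt; rewrite -Eqq' // Eqp.
Qed.

End FiniteDependence.

Section Configurations.
Variables (G : eqType) (A : G -> G -> bool).
Local Notation Om := (OmegaTau A).
Implicit Types (xi eta : word G -> Prop) (u v w z : word G) (x y : G).

Lemma OmegaTau_reduced xi w : Om xi -> xi w -> reduced w.
Proof. by case=> Hr *; exact: Hr. Qed.

Lemma OmegaTau_nil xi : Om xi -> xi [::].
Proof. by case. Qed.

Lemma OmegaTau_take xi n w : Om xi -> xi w -> xi (take n w).
Proof. by case=> _ H0 Hconv _ _ Hw; exact: Hconv [::] w n H0 Hw. Qed.

Lemma OmegaTau_rcons xi w a : Om xi -> xi (rcons w a) -> xi w.
Proof.
by move=> HO /(OmegaTau_take (size w) HO); rewrite -cats1 take_size_cat.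
Qed.

Lemma translateE x xi v : Om xi ->
  translate x xi v <-> reduced v /\ xi (fmul (geninv x) v).
Proof.
move=> HO; split=> [[w [Hw ->]]|[Hv Hxv]].
  have Hr := OmegaTau_reduced HO Hw.
  by split; [exact: reduced_fmul | rewrite (fmulK (gen x))].
by exists (fmul (geninv x) v); rewrite (fmulKV (gen x)).
Qed.

Lemma OmegaTau_translate x xi : Om xi -> xi (geninv x) -> Om (translate x xi).
Proof.
move=> HO Hx; have [_ _ Hconv Hsucc Hback] := HO.
have trE v := translateE x v HO.
split.
- by move=> w /trE[].
- exact/trE.
- move=> s t n /trE[Hs Hs'] /trE[Ht Ht']; apply/trE; split.
    by rewrite reduced_fmul // reduced_take // reduced_fmul.
  rewrite -fmulA ?reduced_take ?reduced_fmul //.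
  by rewrite -{2}(fmulKV (gen x) Hs) finv_fmul //; exact: Hconv.
- move=> w y y' /trE[_ Hw] /trE[_ Hwy] /trE[_ Hwy'].
  by apply: (Hsucc _ _ _ Hw); rewrite fmulA.
- move=> w y x' /trE[Hr Hw] /trE[_ Hwy].
  rewrite -(Hback (fmul (geninv x) w) y) ?fmulA // trE.
  by split=> [[]|] //; split=> //; exact: reduced_fmul.
Qed.

Lemma unbounded_translate x xi : Om xi -> unbounded xi -> unbounded (translate x xi).
Proof.
move=> HO Hu [t [Ht Hle]]; apply: Hu; exists (fmul (geninv x) t).
split=> [|s Hs]; first exact: reduced_fmul.
by have := Hle (fmul (gen x) s) (ex_intro _ s (conj Hs erefl)); rewrite /fle finv_fmul.
Qed.

Lemma OmegaTilde_translate x xi : OmegaTilde A xi -> xi (geninv x) ->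
  OmegaTilde A (translate x xi).
Proof.
move=> [HO Happrox] Hx; split; first exact: OmegaTau_translate.
move=> l; have [eta [HOeta Hu Hag]] := Happrox (geninv x :: map (fmul (geninv x)) l).
have Hetax : eta (geninv x) by apply/Hag; rewrite ?inE ?eqxx.
exists (translate x eta); split; [exact: OmegaTau_translate | exact: unbounded_translate |].
move=> w Hw; rewrite (translateE _ _ HO) (translateE _ _ HOeta).
by rewrite (Hag (fmul (geninv x) w)) // inE map_f ?orbT.
Qed.

Definition negative u : bool := all (fun a : letter G => ~~ a.2) u.

(* The generator [z] with [u * z] in a configuration containing [gen y], for a
   negative word [u] in it: one step back along [u], or [y] when [u] is empty. *)
Definition succ_gen y u : G := (last (y, false) u).1.

Lemma negative_reduced u : negative u -> reduced u.
Proof.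
elim: u => [|a u IH] // /andP[na nu]; case: u nu IH => [|b u] // nu /(_ nu) Hbu.
move: nu => /andP[nb _]; rewrite -[reduced _]/((b != linv a) && reduced (b :: u)) Hbu andbT.
by case: a b na nb {Hbu} => ? [] [? []] // _ _; rewrite /linv xpair_eqE andbF.
Qed.

Lemma OmegaTau_succ_gen xi y u : Om xi -> xi (gen y) -> negative u -> xi u ->
  xi (fmul u (gen (succ_gen y u))).
Proof.
move=> HO Hy; case/lastP: u => [|u [b []]] //; rewrite /negative all_rcons //= => _ Hub.
have Hu := OmegaTau_rcons HO Hub.
by rewrite /succ_gen last_rcons fmul_rcons /= eqxx fmulw0 // (OmegaTau_reduced HO Hu).
Qed.

Lemma OmegaTau_rcons_geninvE xi y u x : Om xi -> xi (gen y) -> negative u ->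
  xi (rcons u (x, false)) <-> xi u /\ A x (succ_gen y u).
Proof.
move=> HO Hy nu; have [_ _ _ _ Hback] := HO.
have Eux : fmul u (geninv x) = rcons u (x, false).
  by rewrite fmul_cat /geninv cats1 // negative_reduced // /negative all_rcons; exact: nu.
split=> [Hux | [Hu Hx]].
  have Hu := OmegaTau_rcons HO Hux.
  by split=> //; apply/(Hback _ _ _ Hu (OmegaTau_succ_gen HO Hy nu Hu)); rewrite Eux.
by rewrite -Eux; apply/(Hback _ _ _ Hu (OmegaTau_succ_gen HO Hy nu Hu)).
Qed.

Lemma OmegaTau_negative_eq xi xi' y u : Om xi -> Om xi' -> xi (gen y) -> xi' (gen y) ->
  negative u -> xi u <-> xi' u.
Proof.
move=> HO HO' Hy Hy'; elim/last_ind: u => [_|u [x []] IH]; rewrite /negative ?all_rcons //=.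
  by split=> _; exact: OmegaTau_nil.
move=> nu; rewrite (OmegaTau_rcons_geninvE _ HO Hy nu).
by rewrite (OmegaTau_rcons_geninvE _ HO' Hy' nu) IH.
Qed.

Lemma OmegaTau_rcons_negative xi y u a : Om xi -> xi (gen y) -> negative u ->
  u != [::] -> xi (rcons u a) -> ~~ a.2.
Proof.
move=> HO Hy; case/lastP: u => [//|u c] nu _.
have : ~~ c.2 by move: nu; rewrite /negative all_rcons => /andP[].
case: c nu => b [] // nu _; case: a => z [] // Hua; have [_ _ _ Huniq _] := HO.
have Hub := OmegaTau_rcons HO Hua.
have Hsucc := OmegaTau_succ_gen HO Hy nu Hub.
rewrite /succ_gen last_rcons /= in Hsucc.
have Hz : xi (fmul (rcons u (b, false)) (gen z)).
  by rewrite fmul_cat /gen cats1 // (OmegaTau_reduced HO Hua).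
have := reduced_drop (size u) (OmegaTau_reduced HO Hua).
by rewrite -(Huniq _ _ _ Hub Hsucc Hz) -!cats1 -catA drop_size_cat //= eqxx.
Qed.

Lemma OmegaTau_negative_head xi y x u : Om xi -> xi (gen y) ->
  xi ((x, false) :: u) -> negative ((x, false) :: u).
Proof.
move=> HO Hy; elim/last_ind: u => [//|u a IH]; rewrite -rcons_cons => Hxua.
have nxu := IH (OmegaTau_rcons HO Hxua).
rewrite /negative all_rcons; apply/andP; split; last exact: nxu.
exact: OmegaTau_rcons_negative HO Hy nxu isT Hxua.
Qed.

Lemma OmegaTau_negative_head_eq xi xi' y x u : Om xi -> Om xi' ->
  xi (gen y) -> xi' (gen y) -> xi ((x, false) :: u) <-> xi' ((x, false) :: u).
Proof.
move=> HO HO' Hy Hy'; split=> Hxu.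
  exact: (OmegaTau_negative_eq HO HO' Hy Hy' (OmegaTau_negative_head HO Hy Hxu)).1.
exact: (OmegaTau_negative_eq HO HO' Hy Hy' (OmegaTau_negative_head HO' Hy' Hxu)).2.
Qed.

Definition agree_upto k xi xi' := forall w, (size w <= k)%N -> xi w <-> xi' w.

Lemma agree_upto_translate x k xi xi' y : Om xi -> Om xi' ->
  xi (gen y) -> xi' (gen y) -> agree_upto k xi xi' ->
  agree_upto k.+1 (translate x xi) (translate x xi').
Proof.
move=> HO HO' Hy Hy' Hk w Hw; rewrite (translateE _ _ HO) (translateE _ _ HO').
suff -> : xi (fmul (geninv x) w) <-> xi' (fmul (geninv x) w) by [].
have Eneg u := OmegaTau_negative_head_eq x u HO HO' Hy Hy'.
case: w Hw => [|b w] Hw /=; first exact: Eneg.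
by case: eqP => _; [exact: Hk | exact: Eneg].
Qed.

Definition approximable (P : (word G -> Prop) -> Prop) xi :=
  forall l : seq (word G), exists2 eta, P eta & agree_on l xi eta.

Lemma approximable_agree3 P xi : approximable P xi -> forall w1 w2 w3,
  exists2 eta, P eta & [/\ xi w1 <-> eta w1, xi w2 <-> eta w2 & xi w3 <-> eta w3].
Proof.
move=> Hxi w1 w2 w3; have [eta Peta Hag] := Hxi [:: w1; w2; w3].
by exists eta => //; split; apply: Hag; rewrite !inE eqxx ?orbT.
Qed.

Lemma OmegaTau_approximable xi : approximable Om xi -> Om xi.
Proof.
move=> Hxi; have H3 := approximable_agree3 Hxi; split.
- move=> w Hw; have [eta HO [E _ _]] := H3 w w w.
  by apply: OmegaTau_reduced HO _; apply/E.
- by have [eta HO [E _ _]] := H3 [::] [::] [::]; apply/E; exact: OmegaTau_nil HO.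
- move=> s t k Hs Ht.
  have [eta [_ _ Hconv _ _] [Es Et E]] := H3 s t (fmul s (take k (fmul (finv s) t))).
  by apply/E/Hconv; [apply/Es | apply/Et].
- move=> w y y' Hw Hwy Hwy'.
  have [eta [_ _ _ Huniq _] [Ew Ewy Ewy']] := H3 w (fmul w (gen y)) (fmul w (gen y')).
  by apply: (Huniq w); [apply/Ew | apply/Ewy | apply/Ewy'].
- move=> w y x Hw Hwy.
  have [eta [_ _ _ _ Hback] [Ew Ewy E]] := H3 w (fmul w (gen y)) (fmul w (geninv x)).
  by rewrite E; apply: Hback; [apply/Ew | apply/Ewy].
Qed.

Lemma Delta_approximable t xi : approximable (Delta A t) xi -> Delta A t xi.
Proof.
move=> Hxi; split; last by have [eta [_ Ht] Hag] := Hxi [:: t]; apply/Hag; rewrite ?inE.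
split.
  by apply: OmegaTau_approximable => l; have [eta [[HO _] _] Hag] := Hxi l; exists eta.
move=> l; have [eta [[_ Heta] _] Hag] := Hxi l; have [zeta [HO Hu Hag']] := Heta l.
by exists zeta; split=> // w Hw; rewrite (Hag _ Hw) (Hag' _ Hw).
Qed.

Lemma closed_Delta t : closed [set p : word G -> bool | Delta A t (fun w => p w)]%classic.
Proof.
move=> p Hp; apply: Delta_approximable => l.
have [q [Kq Eqp]] := Hp _ (nbhs_eq_on p l).
by exists (fun w => is_true (q w)) => // w /Eqp ->.
Qed.

Lemma compact_Delta t : compact [set p : word G -> bool | Delta A t (fun w => p w)]%classic.
Proof.
have cT : compact [set: word G -> bool]%classic.
  have := @tychonoff (word G) (fun=> bool) _ (fun=> bool_compact).
  by congr (compact _); apply/seteqP; split.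
exact: subclosed_compact (@closed_Delta t) cT (subsetT _).
Qed.

Definition determined_upto (R : Type) k (h : (word G -> Prop) -> R) t :=
  forall xi xi', Delta A t xi -> Delta A t xi' -> agree_upto k xi xi' -> h xi = h xi'.

Lemma continuous_on_Delta_determined t h : continuous_on_Delta A t h ->
  exists k, determined_upto k h t.
Proof.
move=> hc.
have [|L HL] :=
  compact_finite_dependence (h := fun p => h (fun w => p w)) (@compact_Delta t).
  move=> p Kp; have [l hl] := hc _ Kp.
  by exists l => q Kq Eqp; apply: hl => // w /Eqp ->.
have asboolK (zeta : word G -> Prop) : (fun w => `[< zeta w >] : Prop) = zeta.
  by apply: funext => w; rewrite asboolE.
exists (\max_(w <- L) size w)%N => xi xi' Hxi Hxi' Hag.
have := HL (fun w => `[< xi w >]) (fun w => `[< xi' w >]).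
rewrite /= !asboolK; apply=> // w Lw.
by apply/asbool_equiv_eq/Hag; exact: leq_bigmax_seq.
Qed.

Lemma Delta_genE xi y i : Delta A (gen y) xi -> Delta A (gen i) xi <-> i = y.
Proof.
move=> Hxi; have [[HO _] Hy] := Hxi; have [_ _ _ Huniq _] := HO.
by split=> [[_ Hi]|->] //; exact: Huniq [::] i y (OmegaTau_nil HO) Hi Hy.
Qed.

Lemma Delta_geninvE xi y i : Delta A (gen y) xi -> Delta A (geninv i) xi <-> A i y.
Proof.
move=> Hxi; have [[HO _] Hy] := Hxi; have [_ _ _ _ Hback] := HO.
have E := Hback [::] y i (OmegaTau_nil HO) Hy.
by split=> [[_ /E] | /E] //; split=> //; exact: Hxi.1.
Qed.

Lemma Delta_translate x xi : Delta A (geninv x) xi -> Delta A (gen x) (translate x xi).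
Proof.
move=> [Hxi Hx]; split; first exact: OmegaTilde_translate.
apply/(translateE _ _ Hxi.1); split=> //.
by rewrite (fmulV (gen x)); exact: OmegaTau_nil Hxi.1.
Qed.

Lemma psiR_Delta_gen g y xi xi' : psiR A g ->
  Delta A (gen y) xi -> Delta A (gen y) xi' -> g xi = g xi'.
Proof.
move=> Hg Hxi Hxi'.
have Egen i : `[< Delta A (gen i) xi >] = `[< Delta A (gen i) xi' >].
  by apply: asbool_equiv_eq; rewrite (Delta_genE _ Hxi) (Delta_genE _ Hxi').
have Egeninv i : `[< Delta A (geninv i) xi >] = `[< Delta A (geninv i) xi' >].
  by apply: asbool_equiv_eq; rewrite (Delta_geninvE _ Hxi) (Delta_geninvE _ Hxi').
by elim: Hg => [|i|i|g1 g2 _ -> _ ->|g1 _ ->|g1 g2 _ -> _ ->] //=; rewrite ?Egen ?Egeninv.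
Qed.

Lemma sum_Delta_gen s f y xi : in_dsum A s f -> Delta A (gen y) xi ->
  \sum_(x <- undup s) (if `[< Delta A (gen x) xi >] then f x xi else 0) = f y xi.
Proof.
move=> [_ fs0] Hxi.
have Ex x : `[< Delta A (gen x) xi >] = (x == y).
  by rewrite (asbool_equiv_eq (Delta_genE x Hxi)); apply/asboolP/eqP.
case: (boolP (y \in s)) => ys.
  rewrite (bigD1_seq y) ?mem_undup ?undup_uniq //= Ex eqxx big1 ?addr0 // => x.
  by rewrite Ex => /negbTE ->.
rewrite fs0 // big1_seq // => x /andP[_]; rewrite Ex mem_undup.
by case: eqP => // ->; rewrite (negbTE ys).
Qed.

Section Descent.
Variables (s : seq G) (f : G -> (word G -> Prop) -> int).
Hypothesis fs : in_dsum A s f.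

Lemma in_dsum_determined : exists k, forall y, determined_upto k (f y) (gen y).
Proof.
have [k Hk] := choice (fun x => continuous_on_Delta_determined (fs.1 x)).
exists (\max_(x <- s) k x)%N => y xi xi' Hxi Hxi' Hag.
case: (boolP (y \in s)) => ys; last by rewrite !fs.2.
apply: Hk Hxi Hxi' _ => w Hw; apply: Hag.
exact: leq_trans Hw (leq_bigmax_seq y ys isT).
Qed.

Lemma determined_upto_pred g k : psiR A g ->
  (forall xi, OmegaTilde A xi -> Lalpha A s f xi = g xi) ->
  (forall y, determined_upto k.+1 (f y) (gen y)) ->
  forall y, determined_upto k (f y) (gen y).
Proof.
move=> Hg HL IH y xi xi' Hxi Hxi' Hag.
have Eback x : (if `[< Delta A (geninv x) xi >] then f x (translate x xi) else 0) =
               (if `[< Delta A (geninv x) xi' >] then f x (translate x xi') else 0).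
  have Ex := iff_trans (Delta_geninvE x Hxi) (iff_sym (Delta_geninvE x Hxi')).
  rewrite (asbool_equiv_eq Ex); case: asboolP => // /[dup] Hx' /Ex Hx.
  apply: IH; [exact: Delta_translate Hx | exact: Delta_translate Hx' |].
  exact: agree_upto_translate Hxi.1.1 Hxi'.1.1 Hxi.2 Hxi'.2 Hag.
have := psiR_Delta_gen Hg Hxi Hxi'; rewrite -(HL _ Hxi.1) -(HL _ Hxi'.1).
rewrite /Lalpha !sumrB (sum_Delta_gen fs Hxi) (sum_Delta_gen fs Hxi').
by rewrite (eq_bigr _ (fun x _ => Eback x)) => /addIr.
Qed.

End Descent.

Lemma determined_upto0_const (R : Type) (h : (word G -> Prop) -> R) t xi xi' :
  determined_upto 0 h t -> Delta A t xi -> Delta A t xi' -> h xi = h xi'.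
Proof.
move=> H0 Hxi Hxi'; apply: H0 => // -[|a w] // _.
by split=> _; apply: OmegaTau_nil; [exact: Hxi'.1.1 | exact: Hxi.1.1].
Qed.

End Configurations.

Theorem lemma4p11 (G : eqType) (A : G -> G -> bool)
  (no_zero_row : forall i : G, exists j : G, A i j)
  (s : seq G) (f : G -> (word G -> Prop) -> int) :
  in_dsum A s f ->
  (exists g, psiR A g /\ forall xi, OmegaTilde A xi -> Lalpha A s f xi = g xi) ->
  exists n : G -> int,
    (exists s' : seq G, forall x, x \notin s' -> n x = 0) /\
    (forall x xi, Delta A (gen x) xi -> f x xi = n x).
Proof.
move=> fs [g [Hg HL]].
have [k Hk] := in_dsum_determined fs.
have H0 y : determined_upto A 0 (f y) (gen y).
  by elim: k Hk => // k IH /(determined_upto_pred fs Hg HL); exact: IH.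
have Hc x : exists c : int,
    (x \notin s -> c = 0) /\ forall xi, Delta A (gen x) xi -> f x xi = c.
  have [[xi0 Hxi0]|none] := pselect (exists xi, Delta A (gen x) xi); last first.
    by exists 0; split=> // xi Hxi; exfalso; apply: none; exists xi.
  exists (f x xi0); split=> [xs|xi Hxi]; first exact: fs.2.
  exact: determined_upto0_const (H0 x) Hxi Hxi0.
have [n Hn] := choice Hc.
exists n; split=> [|x xi Hxi]; first by exists s => x /(proj1 (Hn x)).
exact: (Hn x).2.
Qed.
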